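(* Let $s>1/2$. Then for every $t\in\mathbb{R}$ the trilinear operator $R_3$ defined in the context maps $(\dot H^s)^3$ into $\dot H^s$ and satisfies $$\|R_3(u,v,w)\|_{\dot H^s}\le c_6(s)\|u\|_{\dot H^s}\|v\|_{\dot H^s}\|w\|_{\dot H^s},$$ with a constant $c_6(s)$ depending only on $s$.
   Context: Write $\mathbb{Z}_0=\mathbb{Z}\setminus\{0\}$. For $s\in\mathbb{R}$, $\dot H^s$ denotes the Hilbert space of complex sequences $v=(v_k)_{k\in\mathbb{Z}_0}$ with $\|v\|_{\dot H^s}^2=\sum_{k\in\mathbb{Z}_0}|k|^{2s}|v_k|^2<\infty$. For $t\in\mathbb{R}$, $$R_3(u,v,w)_k=\sum_{k_1+k_2+k_3=k,\ k_1,k_2,k_3\in\mathbb{Z}_0}\frac{e^{3i(k_1+k_2)(k_2+k_3)(k_3+k_1)t}}{k_1}u_{k_1}v_{k_2}w_{k_3},\qquad k\in\mathbb{Z}_0.$$ *)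

From Stdlib Require Import Reals ZArith List.
From Coquelicot Require Import Coquelicot.
Open Scope R_scope.

(* Sequences indexed by Z; the value at index 0 is irrelevant (index set Z_0). *)
Definition seqC := Z -> C.

Definition lsum {I : Type} (f : I -> C) (l : list I) : C :=
  fold_right (fun i acc => Cplus (f i) acc) (RtoC 0) l.

Definition lsumR {I : Type} (f : I -> R) (l : list I) : R :=
  fold_right (fun i acc => f i + acc) 0 l.

Definition abs_summable {I : Type} (f : I -> C) : Prop :=
  exists M : R, forall l : list I, NoDup l -> lsumR (fun i => Cmod (f i)) l <= M.

(* Unconditional sum (limit along the net of finite index sets). *)
Definition has_sum {I : Type} (f : I -> C) (a : C) : Prop :=
  forall eps : R, 0 < eps -> exists l0 : list I,
    forall l : list I, NoDup l -> incl l0 l -> Cmod (Cminus (lsum f l) a) < eps.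

(* |k|^{2s} |v_k|^2 for k in Z_0, summed over k = ±(n+1). *)
Definition Hs_term (s : R) (v : seqC) (n : nat) : R :=
  Rpower (INR (S n)) (2 * s) *
    ((Cmod (v (Z.of_nat (S n))))^2 + (Cmod (v (- Z.of_nat (S n))%Z))^2).

Definition inHs (s : R) (v : seqC) : Prop := ex_series (Hs_term s v).

Definition Hs_norm (s : R) (v : seqC) : R := sqrt (Series (Hs_term s v)).

Definition cexpi (x : R) : C := (cos x, sin x).

Definition R3_term (t : R) (u v w : seqC) (k : Z) (p : Z * Z) : C :=
  let k1 := fst p in let k2 := snd p in let k3 := (k - k1 - k2)%Z in
  if (Z.eqb k1 0 || Z.eqb k2 0 || Z.eqb k3 0)%bool then RtoC 0
  else Cmult (Cmult (Cmult
         (Cmult (cexpi (3 * IZR ((k1 + k2) * (k2 + k3) * (k3 + k1)) * t))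
                (Cinv (RtoC (IZR k1))))
         (u k1)) (v k2)) (w k3).

Definition is_R3 (t : R) (u v w r : seqC) : Prop :=
  forall k : Z, k <> 0%Z ->
    abs_summable (R3_term t u v w k) /\ has_sum (R3_term t u v w k) (r k).

From Stdlib Require Import Reals ZArith List Lia Lra Permutation IndefiniteDescription.
From Coquelicot Require Import Coquelicot.
Open Scope R_scope.

(* Since |k1 + k2 + k3|^s <= 3^s (|k1|^s + |k2|^s + |k3|^s), the summand of R3 weighted by
   |k|^s is bounded, after dropping the phase and the factor 1/k1, by 3^s times the product
   U(k1) V(k2) W(k3) of the weighted moduli of the inputs and a kernel that is a sum of
   products |ki|^-s |kj|^-s.  Cauchy-Schwarz in (k1, k2) separates the two factors: the kernel
   has square sum at most 9 (sum_{j<>0} |j|^-2s)^2, finite because 2s > 1, while summing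
   U^2 V^2 W^2 over k as well gives the product of the three squared norms.  The same bound on
   the squares [-N,N]^2 gives absolute convergence of the defining series, and passes to the
   limit N -> oo. *)

(** * Finite sums over lists *)

Lemma lsumR_cons {I : Type} (f : I -> R) a l : lsumR f (a :: l) = f a + lsumR f l.
Proof. reflexivity. Qed.

Lemma lsumR_app {I : Type} (f : I -> R) l1 l2 :
  lsumR f (l1 ++ l2) = lsumR f l1 + lsumR f l2.
Proof. induction l1 as [|a l1 IH]; simpl; [ring | rewrite IH; ring]. Qed.

Lemma lsumR_ext {I : Type} (f g : I -> R) l :
  (forall i, In i l -> f i = g i) -> lsumR f l = lsumR g l.
Proof.
  induction l as [|a l IH]; intros H; simpl; [reflexivity|].
  rewrite H, IH; auto with datatypes.
Qed.

Lemma lsumR_le {I : Type} (f g : I -> R) l :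
  (forall i, In i l -> f i <= g i) -> lsumR f l <= lsumR g l.
Proof.
  induction l as [|a l IH]; intros H; simpl; [lra|].
  assert (f a <= g a) by auto with datatypes.
  assert (lsumR f l <= lsumR g l) by auto with datatypes.
  lra.
Qed.

Lemma lsumR_ge0 {I : Type} (f : I -> R) l : (forall i, 0 <= f i) -> 0 <= lsumR f l.
Proof.
  intros H. replace 0 with (lsumR (fun _ : I => 0) l).
  - apply lsumR_le; auto.
  - induction l; simpl; lra.
Qed.

Lemma lsumR_plus {I : Type} (f g : I -> R) l :
  lsumR (fun i => f i + g i) l = lsumR f l + lsumR g l.
Proof. induction l as [|a l IH]; simpl; [ring | rewrite IH; ring]. Qed.

Lemma lsumR_scal {I : Type} c (f : I -> R) l : lsumR (fun i => c * f i) l = c * lsumR f l.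
Proof. induction l as [|a l IH]; simpl; [ring | rewrite IH; ring]. Qed.

Lemma lsumR_map {I J : Type} (h : J -> I) (f : I -> R) l :
  lsumR f (map h l) = lsumR (fun j => f (h j)) l.
Proof. induction l as [|a l IH]; simpl; [reflexivity | rewrite IH; reflexivity]. Qed.

Lemma lsumR_comm {I J : Type} (F : I -> J -> R) l1 l2 :
  lsumR (fun a => lsumR (F a) l2) l1 = lsumR (fun b => lsumR (fun a => F a b) l1) l2.
Proof.
  induction l1 as [|a l1 IH]; simpl.
  - induction l2 as [|b l2 IH2]; simpl; [reflexivity | rewrite <- IH2; ring].
  - rewrite IH, lsumR_plus. reflexivity.
Qed.

Lemma lsumR_list_prod {I J : Type} (F : I * J -> R) l1 l2 :
  lsumR F (list_prod l1 l2) = lsumR (fun a => lsumR (fun b => F (a, b)) l2) l1.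
Proof.
  induction l1 as [|a l1 IH]; simpl; [reflexivity|].
  rewrite lsumR_app, lsumR_map, IH. reflexivity.
Qed.

Lemma lsumR_mult {I J : Type} (f : I -> R) (g : J -> R) l1 l2 :
  lsumR (fun a => lsumR (fun b => f a * g b) l2) l1 = lsumR f l1 * lsumR g l2.
Proof.
  rewrite Rmult_comm, <- lsumR_scal.
  apply lsumR_ext. intros a _. rewrite Rmult_comm, <- lsumR_scal. reflexivity.
Qed.

Lemma lsumR_perm {I : Type} (f : I -> R) l l' : Permutation l l' -> lsumR f l = lsumR f l'.
Proof. induction 1; simpl; lra. Qed.

Lemma lsum_app {I : Type} (f : I -> C) l1 l2 :
  lsum f (l1 ++ l2) = Cplus (lsum f l1) (lsum f l2).
Proof.
  induction l1 as [|a l1 IH]; simpl.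
  - rewrite Cplus_0_l. reflexivity.
  - rewrite IH, Cplus_assoc. reflexivity.
Qed.

Lemma lsum_perm {I : Type} (f : I -> C) l l' : Permutation l l' -> lsum f l = lsum f l'.
Proof.
  induction 1; simpl; try congruence.
  rewrite !Cplus_assoc, (Cplus_comm (f y)). reflexivity.
Qed.

Lemma Cmod_lsum_le {I : Type} (f : I -> C) l : Cmod (lsum f l) <= lsumR (fun i => Cmod (f i)) l.
Proof.
  induction l as [|a l IH]; simpl.
  - rewrite Cmod_0. lra.
  - eapply Rle_trans; [apply Cmod_triangle | lra].
Qed.

Lemma NoDup_incl_Permutation_app {I : Type} (l l' : list I) :
  NoDup l -> incl l l' -> exists l'', Permutation l' (l ++ l'').
Proof.
  revert l'. induction l as [|a l IH]; intros l' Hn Hi.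
  - exists l'. apply Permutation_refl.
  - apply NoDup_cons_iff in Hn as [Ha Hn].
    destruct (in_split a l') as [l1 [l2 ->]]; [apply Hi; left; reflexivity|].
    destruct (IH (l1 ++ l2)) as [l3 P]; [exact Hn| |].
    + intros x Hx. assert (Hx' : In x (l1 ++ a :: l2)) by (apply Hi; right; exact Hx).
      apply in_app_or in Hx' as [Hx'|[<-|Hx']]; [| contradiction |];
        apply in_or_app; auto.
    + exists l3. eapply perm_trans; [apply Permutation_sym, Permutation_middle|].
      apply perm_skip, P.
Qed.

Lemma lsumR_incl {I : Type} (f : I -> R) l l' :
  (forall i, 0 <= f i) -> NoDup l -> incl l l' -> lsumR f l <= lsumR f l'.
Proof.
  intros Hf Hn Hi. destruct (NoDup_incl_Permutation_app l l' Hn Hi) as [l'' P].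
  rewrite (lsumR_perm f _ _ P), lsumR_app.
  pose proof (lsumR_ge0 f l'' Hf). lra.
Qed.

Lemma Cmod_lsum_sub_incl {I : Type} (f : I -> C) l0 l : NoDup l0 -> incl l0 l ->
  Cmod (Cminus (lsum f l) (lsum f l0)) <=
  lsumR (fun i => Cmod (f i)) l - lsumR (fun i => Cmod (f i)) l0.
Proof.
  intros Hn Hi. destruct (NoDup_incl_Permutation_app l0 l Hn Hi) as [l'' P].
  rewrite (lsum_perm f _ _ P), (lsumR_perm _ _ _ P), lsum_app, lsumR_app.
  replace (Cminus (Cplus (lsum f l0) (lsum f l'')) (lsum f l0)) with (lsum f l'')
    by (destruct (lsum f l0), (lsum f l''); unfold Cminus, Cplus, Copp; simpl; f_equal; ring).
  pose proof (Cmod_lsum_le f l''). lra.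
Qed.

Lemma is_lim_seq_lsumR {I : Type} (D : I -> nat -> R) (A : I -> R) l :
  (forall i, In i l -> is_lim_seq (D i) (A i)) ->
  is_lim_seq (fun N => lsumR (fun i => D i N) l) (lsumR A l).
Proof.
  induction l as [|a l IH]; intros H; simpl.
  - apply is_lim_seq_const.
  - apply is_lim_seq_plus'; auto with datatypes.
Qed.

Lemma quadratic_ge0_discriminant (a b c : R) :
  0 <= a -> (forall x, 0 <= a * x ^ 2 + 2 * b * x + c) -> b ^ 2 <= a * c.
Proof.
  intros Ha H. destruct (Req_dec a 0) as [->|Ha0].
  - destruct (Req_dec b 0) as [->|Hb0]; [specialize (H 0); nra|].
    specialize (H (- (c + 1) / (2 * b))).
    replace (0 * (- (c + 1) / (2 * b)) ^ 2 + 2 * b * (- (c + 1) / (2 * b)) + c) with (-1)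
      in H by (field; exact Hb0).
    lra.
  - specialize (H (- b / a)).
    replace (a * (- b / a) ^ 2 + 2 * b * (- b / a) + c) with ((a * c - b ^ 2) / a)
      in H by (field; exact Ha0).
    assert (0 < a) by lra.
    apply Rmult_le_compat_l with (r := a) in H; [|lra].
    replace (a * ((a * c - b ^ 2) / a)) with (a * c - b ^ 2) in H by (field; lra).
    lra.
Qed.

Lemma lsumR_Cauchy_Schwarz {I : Type} (f g : I -> R) l :
  lsumR (fun i => f i * g i) l ^ 2 <= lsumR (fun i => f i ^ 2) l * lsumR (fun i => g i ^ 2) l.
Proof.
  apply quadratic_ge0_discriminant; [apply lsumR_ge0; intros; apply pow2_ge_0|].
  intros x.
  replace (lsumR (fun i => f i ^ 2) l * x ^ 2 + 2 * lsumR (fun i => f i * g i) l * x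
           + lsumR (fun i => g i ^ 2) l)
    with (lsumR (fun i => (f i * x + g i) ^ 2) l).
  - apply lsumR_ge0. intros; apply pow2_ge_0.
  - induction l as [|a l IH]; simpl in *; [ring | rewrite IH; ring].
Qed.

(** * Symmetric ranges of integers *)

Fixpoint zball (M : nat) : list Z :=
  match M with
  | O => 0%Z :: nil
  | S m => Z.of_nat (S m) :: (- Z.of_nat (S m))%Z :: zball m
  end.

Lemma In_zball M j : In j (zball M) <-> (Z.abs j <= Z.of_nat M)%Z.
Proof.
  induction M as [|M IH]; simpl.
  - split; [intros [<-|[]]; simpl; lia | intros; left; lia].
  - rewrite IH. split; [intros [H|[H|H]]; lia|].
    intros H.
    destruct (Z.eq_dec j (Z.of_nat (S M))) as [E|E]; [left; lia|].
    destruct (Z.eq_dec j (- Z.of_nat (S M))) as [E'|E']; [right; left; lia|].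
    right; right; lia.
Qed.

Lemma NoDup_zball M : NoDup (zball M).
Proof.
  induction M as [|M IH]; simpl.
  - constructor; [auto | constructor].
  - constructor; [| constructor; [| exact IH]].
    + intros [H|H]; [lia|]. apply In_zball in H. lia.
    + intros H. apply In_zball in H. lia.
Qed.

Lemma zball_incl M M' : (M <= M')%nat -> incl (zball M) (zball M').
Proof. intros H j Hj. apply In_zball in Hj. apply In_zball. lia. Qed.

Lemma zball_cover (l : list Z) : exists M, incl l (zball M).
Proof.
  induction l as [|a l [M HM]]; [exists O; intros x []|].
  exists (Nat.max M (Z.to_nat (Z.abs a))). intros x [<-|Hx].
  - apply In_zball. lia.
  - apply HM, In_zball in Hx. apply In_zball. lia.
Qed.

Definition zbox (N : nat) : list (Z * Z) := list_prod (zball N) (zball N).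

Lemma NoDup_list_prod {I J : Type} (l1 : list I) (l2 : list J) :
  NoDup l1 -> NoDup l2 -> NoDup (list_prod l1 l2).
Proof.
  induction 1 as [|a l1 Ha Hl1 IH]; intros Hl2; simpl; [constructor|].
  apply NoDup_app; auto.
  - apply FinFun.Injective_map_NoDup; [intros x y E; congruence | exact Hl2].
  - intros [x y] Hx Hy. apply in_map_iff in Hx as [z [E _]]. injection E as -> _.
    apply in_prod_iff in Hy. tauto.
Qed.

Lemma NoDup_zbox N : NoDup (zbox N).
Proof. apply NoDup_list_prod; apply NoDup_zball. Qed.

Lemma zbox_incl N N' : (N <= N')%nat -> incl (zbox N) (zbox N').
Proof.
  intros H [a b] Hp. apply in_prod_iff in Hp. apply in_prod_iff.
  split; apply (zball_incl N N' H); tauto.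
Qed.

Lemma zbox_cover (l : list (Z * Z)) : exists N, incl l (zbox N).
Proof.
  destruct (zball_cover (map fst l)) as [M1 H1].
  destruct (zball_cover (map snd l)) as [M2 H2].
  exists (Nat.max M1 M2). intros [a b] Hp. apply in_prod_iff. split.
  - apply (zball_incl M1); [lia|]. apply H1, in_map_iff. exists (a, b); auto.
  - apply (zball_incl M2); [lia|]. apply H2, in_map_iff. exists (a, b); auto.
Qed.

(** * Unconditional sums along an exhaustion *)

Lemma Cmod_le_Rabs_fst_snd (z : C) : Cmod z <= Rabs (fst z) + Rabs (snd z).
Proof.
  destruct z as [x y]; unfold Cmod; simpl.
  pose proof (Rabs_pos x); pose proof (Rabs_pos y).
  rewrite <- (sqrt_pow2 (Rabs x + Rabs y)) by lra.
  apply sqrt_le_1_alt.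
  pose proof (Rsqr_abs x); pose proof (Rsqr_abs y). unfold Rsqr in *. nra.
Qed.

Lemma Cmod_sub_triangle (x y z : C) :
  Cmod (Cminus x z) <= Cmod (Cminus x y) + Cmod (Cminus y z).
Proof.
  replace (Cminus x z) with (Cplus (Cminus x y) (Cminus y z))
    by (destruct x, y, z; unfold Cminus, Cplus, Copp; simpl; f_equal; ring).
  apply Cmod_triangle.
Qed.

Lemma Rabs_Cmod_sub_le (x y : C) : Rabs (Cmod x - Cmod y) <= Cmod (Cminus x y).
Proof.
  assert (Cmod x <= Cmod (Cminus x y) + Cmod y).
  { replace x with (Cplus (Cminus x y) y) at 1
      by (destruct x, y; unfold Cminus, Cplus, Copp; simpl; f_equal; ring).
    apply Cmod_triangle. }
  assert (Cmod y <= Cmod (Cminus x y) + Cmod x).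
  { replace y with (Cplus (Copp (Cminus x y)) x) at 1
      by (destruct x, y; unfold Cminus, Cplus, Copp; simpl; f_equal; ring).
    rewrite <- (Cmod_opp (Cminus x y)). apply Cmod_triangle. }
  apply Rabs_le. lra.
Qed.

(* [g + B] and [B - g] are nondecreasing, so both converge and pin down the limit of [g]. *)
Lemma dominated_increments_lim (g B : nat -> R) (A : R) :
  is_lim_seq B A -> (forall n, B n <= B (S n)) ->
  (forall n m, (n <= m)%nat -> Rabs (g m - g n) <= B m - B n) ->
  exists l, forall n, Rabs (l - g n) <= A - B n.
Proof.
  intros HA HBinc Hg.
  assert (HBA : forall n, B n <= A) by (apply is_lim_seq_incr_compare; assumption).
  assert (Hstep : forall n, Rabs (g (S n) - g n) <= B (S n) - B n) by (intros; apply Hg; lia).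
  assert (Hup : forall n, g n + B n <= g (S n) + B (S n)).
  { intros n. specialize (Hstep n). apply Rabs_le_between in Hstep. lra. }
  assert (Hdown : forall n, B n - g n <= B (S n) - g (S n)).
  { intros n. specialize (Hstep n). apply Rabs_le_between in Hstep. lra. }
  destruct (ex_finite_lim_seq_incr (fun n => g n + B n) (g 0%nat - B 0%nat + 2 * A) Hup)
    as [L HL].
  { intros n. specialize (Hg 0%nat n (Nat.le_0_l n)). specialize (HBA n).
    apply Rabs_le_between in Hg. lra. }
  assert (HL' : is_lim_seq (fun n => B n - g n) (2 * A - L)).
  { apply (is_lim_seq_ext (fun n => 2 * B n - (g n + B n))); [intros; ring|].
    apply is_lim_seq_minus'; [apply (is_lim_seq_mult' (fun _ => 2)) | exact HL].
    - apply is_lim_seq_const.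
    - exact HA. }
  exists (L - A). intros n.
  pose proof (is_lim_seq_incr_compare _ _ HL Hup n).
  pose proof (is_lim_seq_incr_compare _ _ HL' Hdown n).
  simpl in *. apply Rabs_le. lra.
Qed.

Lemma dominated_increments_lim_C (z : nat -> C) (B : nat -> R) (A : R) :
  is_lim_seq B A -> (forall n, B n <= B (S n)) ->
  (forall n m, (n <= m)%nat -> Cmod (Cminus (z m) (z n)) <= B m - B n) ->
  exists a, forall n, Cmod (Cminus (z n) a) <= 2 * (A - B n).
Proof.
  intros HA HBinc Hz.
  assert (Hcomp : forall n m, (n <= m)%nat ->
            Rabs (fst (z m) - fst (z n)) <= B m - B n /\
            Rabs (snd (z m) - snd (z n)) <= B m - B n).
  { intros n m Hnm. pose proof (Rmax_Cmod (Cminus (z m) (z n))) as Hmax.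
    specialize (Hz n m Hnm). simpl in Hmax.
    assert (Hle := Rle_trans _ _ _ Hmax Hz).
    split; (eapply Rle_trans; [| exact Hle]); [apply Rmax_l | apply Rmax_r]. }
  destruct (dominated_increments_lim (fun n => fst (z n)) B A HA HBinc) as [x Hx];
    [intros; apply Hcomp; assumption|].
  destruct (dominated_increments_lim (fun n => snd (z n)) B A HA HBinc) as [y Hy];
    [intros; apply Hcomp; assumption|].
  exists (x, y). intros n. eapply Rle_trans; [apply Cmod_le_Rabs_fst_snd|].
  specialize (Hx n). specialize (Hy n). rewrite Rabs_minus_sym in Hx, Hy.
  simpl. unfold Rminus in Hx, Hy. lra.
Qed.

Section Exhaustion.
Variables (I : Type) (E : nat -> list I).
Hypotheses (E_NoDup : forall N, NoDup (E N))
  (E_incl : forall n m, (n <= m)%nat -> incl (E n) (E m))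
  (E_cover : forall l : list I, exists N, incl l (E N)).
Variable f : I -> C.

Lemma lsumR_Cmod_le_of_exhaustion M :
  (forall N, lsumR (fun i => Cmod (f i)) (E N) <= M) ->
  forall l, NoDup l -> lsumR (fun i => Cmod (f i)) l <= M.
Proof.
  intros HM l Hl. destruct (E_cover l) as [N HN].
  eapply Rle_trans; [apply lsumR_incl; [intros; apply Cmod_ge_0 | exact Hl | exact HN] | apply HM].
Qed.

Lemma abs_summable_of_exhaustion M :
  (forall N, lsumR (fun i => Cmod (f i)) (E N) <= M) -> abs_summable f.
Proof. intros HM. exists M. apply lsumR_Cmod_le_of_exhaustion, HM. Qed.

Lemma has_sum_of_exhaustion M :
  (forall N, lsumR (fun i => Cmod (f i)) (E N) <= M) -> exists a, has_sum f a.
Proof.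
  intros HM. set (B N := lsumR (fun i => Cmod (f i)) (E N)).
  assert (HBinc : forall n, B n <= B (S n)).
  { intros n. apply lsumR_incl; [intros; apply Cmod_ge_0 | apply E_NoDup | apply E_incl; lia]. }
  destruct (ex_finite_lim_seq_incr B M HBinc HM) as [A HA].
  assert (HBA : forall n, B n <= A) by (apply is_lim_seq_incr_compare; assumption).
  destruct (dominated_increments_lim_C (fun N => lsum f (E N)) B A HA HBinc) as [a Ha].
  { intros n m Hnm. apply Cmod_lsum_sub_incl; auto. }
  exists a. intros eps Heps.
  destruct (proj2 (is_lim_seq_spec B A) HA (mkposreal (eps / 3) ltac:(simpl; lra)))
    as [N HN].
  specialize (HN N (le_n N)). simpl in HN. apply Rabs_lt_between in HN.
  exists (E N). intros l Hl HNl.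
  pose proof (Cmod_lsum_sub_incl f (E N) l (E_NoDup N) HNl).
  pose proof (lsumR_Cmod_le_of_exhaustion A HBA l Hl).
  pose proof (Ha N).
  eapply Rle_lt_trans; [apply (Cmod_sub_triangle _ (lsum f (E N)))|].
  fold (B N) in *. lra.
Qed.

Lemma has_sum_lim_Cmod_exhaustion a :
  has_sum f a -> is_lim_seq (fun N => Cmod (lsum f (E N))) (Cmod a).
Proof.
  intros Ha. apply is_lim_seq_spec. intros eps.
  destruct (Ha eps (cond_pos eps)) as [l0 Hl0].
  destruct (E_cover l0) as [N0 HN0].
  exists N0. intros N HN.
  eapply Rle_lt_trans; [apply Rabs_Cmod_sub_le|].
  apply Hl0; [apply E_NoDup | intros i Hi; apply (E_incl N0 N HN), HN0, Hi].
Qed.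

End Exhaustion.

(** * Sobolev weights *)

Lemma Rpower_1l y : Rpower 1 y = 1.
Proof. unfold Rpower. rewrite ln_1, Rmult_0_r. apply exp_0. Qed.

Lemma Rpower_neg_telescope (b x : R) : 0 < b -> 0 < x ->
  b * Rpower (x + 1) (- (b + 1)) <= Rpower x (- b) - Rpower (x + 1) (- b).
Proof.
  intros Hb Hx. unfold Rpower.
  set (L := ln (x + 1)). set (l := ln x).
  assert (Hln : l - L <= - / (x + 1)).
  { unfold l, L. rewrite <- ln_div by lra.
    pose proof (exp_ineq1_le (ln (x / (x + 1)))) as H.
    rewrite exp_ln in H by (apply Rdiv_lt_0_compat; lra).
    replace (- / (x + 1)) with (x / (x + 1) - 1) by (field; lra). lra. }
  assert (E1 : exp (- b * l) = exp (- b * L) * exp (b * (L - l))).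
  { rewrite <- exp_plus. f_equal. ring. }
  assert (E2 : exp (- (b + 1) * L) = exp (- b * L) * / (x + 1)).
  { replace (- (b + 1) * L) with (- b * L + - L) by ring.
    rewrite exp_plus, exp_Ropp. unfold L. rewrite exp_ln by lra. reflexivity. }
  pose proof (exp_ineq1_le (b * (L - l))).
  pose proof (exp_pos (- b * L)).
  assert (b * / (x + 1) <= b * (L - l)) by (apply Rmult_le_compat_l; lra).
  rewrite E1, E2. nra.
Qed.

(* Stdlib's [ln] vanishes on nonpositive reals, so [Rpower 0 s = 1]: weights that must
   vanish at the index 0 are set to 0 there by hand. *)
Definition abspow (s : R) (j : Z) : R := Rpower (IZR (Z.abs j)) s.

Definition abspow_inv (s : R) (j : Z) : R := if Z.eqb j 0 then 0 else / abspow s j.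

Definition weighted_coef (s : R) (a : seqC) (j : Z) : R :=
  if Z.eqb j 0 then 0 else abspow s j * Cmod (a j).

Definition zeta_bound (s : R) : R := 2 + 2 / (2 * s - 1).

Section Weights.
Variable s : R.

Lemma abspow_gt0 j : 0 < abspow s j.
Proof. apply exp_pos. Qed.

Lemma abspow_ge1 j : 0 <= s -> j <> 0%Z -> 1 <= abspow s j.
Proof.
  intros Hs Hj. unfold abspow. rewrite <- (Rpower_O (IZR (Z.abs j))) at 1.
  - apply Rle_Rpower; [apply IZR_le; lia | exact Hs].
  - apply IZR_lt. lia.
Qed.

Lemma weighted_coef_ge0 a j : 0 <= weighted_coef s a j.
Proof.
  unfold weighted_coef. destruct (Z.eqb j 0); [lra|].
  apply Rmult_le_pos; [left; apply abspow_gt0 | apply Cmod_ge_0].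
Qed.

Lemma Hs_term_weighted_coef a n :
  Hs_term s a n = weighted_coef s a (Z.of_nat (S n)) ^ 2
                  + weighted_coef s a (- Z.of_nat (S n)) ^ 2.
Proof.
  unfold Hs_term, weighted_coef, abspow.
  destruct (Z.eqb_spec (Z.of_nat (S n)) 0); [lia|].
  destruct (Z.eqb_spec (- Z.of_nat (S n)) 0); [lia|].
  rewrite Z.abs_opp, Z.abs_eq, <- INR_IZR_INZ by lia.
  replace (2 * s) with (s + s) by ring. rewrite Rpower_plus. ring.
Qed.

Lemma Hs_term_ge0 a n : 0 <= Hs_term s a n.
Proof. rewrite Hs_term_weighted_coef. pose proof (pow2_ge_0 (weighted_coef s a (Z.of_nat (S n)))).
  pose proof (pow2_ge_0 (weighted_coef s a (- Z.of_nat (S n)))). lra. Qed.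

Lemma lsumR_weighted_coef_zball a M :
  lsumR (fun j => weighted_coef s a j ^ 2) (zball (S M)) = sum_n (Hs_term s a) M.
Proof.
  induction M as [|M IH].
  - rewrite sum_O, Hs_term_weighted_coef. simpl. change (weighted_coef s a 0) with 0. ring.
  - rewrite sum_Sn, <- IH, Hs_term_weighted_coef. unfold plus. simpl. ring.
Qed.

Lemma lsumR_weighted_coef_le_Series a : inHs s a ->
  forall l, NoDup l -> lsumR (fun j => weighted_coef s a j ^ 2) l <= Series (Hs_term s a).
Proof.
  intros Ha l Hl. destruct (zball_cover l) as [M HM].
  eapply Rle_trans.
  - apply lsumR_incl; [intros; apply pow2_ge_0 | exact Hl |].
    intros j Hj. apply (zball_incl M (S M)); auto.
  - rewrite lsumR_weighted_coef_zball.
    apply (is_lim_seq_incr_compare _ _ (Series_correct _ Ha)).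
    intros n. rewrite sum_Sn. unfold plus. simpl. pose proof (Hs_term_ge0 a (S n)). lra.
Qed.

Lemma Series_Hs_term_ge0 a : inHs s a -> 0 <= Series (Hs_term s a).
Proof. intros Ha. apply (lsumR_weighted_coef_le_Series a Ha nil), NoDup_nil. Qed.

Lemma inHs_of_weighted_bound a Bd :
  (forall M, lsumR (fun j => weighted_coef s a j ^ 2) (zball M) <= Bd) ->
  inHs s a /\ Series (Hs_term s a) <= Bd.
Proof.
  intros H.
  assert (Hb : forall M, sum_n (Hs_term s a) M <= Bd).
  { intros M. rewrite <- lsumR_weighted_coef_zball. apply H. }
  assert (Hinc : forall n, sum_n (Hs_term s a) n <= sum_n (Hs_term s a) (S n)).
  { intros n. rewrite sum_Sn. unfold plus. simpl. pose proof (Hs_term_ge0 a (S n)). lra. }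
  destruct (ex_finite_lim_seq_incr _ Bd Hinc Hb) as [l Hl].
  split; [exists l; exact Hl|].
  rewrite (is_series_unique _ _ Hl).
  apply (is_lim_seq_le _ (fun _ => Bd) _ _ Hb Hl (is_lim_seq_const Bd)).
Qed.

Lemma abspow_inv_sqr j n : Z.abs j = Z.of_nat (S n) ->
  abspow_inv s j ^ 2 = Rpower (INR (S n)) (- (2 * s)).
Proof.
  intros Hj. unfold abspow_inv, abspow. destruct (Z.eqb_spec j 0); [lia|].
  rewrite Hj, <- INR_IZR_INZ.
  replace (- (2 * s)) with (- s + - s) by ring. rewrite Rpower_plus, Rpower_Ropp. ring.
Qed.

Hypothesis hs : 1 / 2 < s.

(* Integral comparison: the partial sums plus [2/(2s-1) m^(1-2s)] are nonincreasing in m. *)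
Lemma lsumR_abspow_inv_sqr_zball m :
  lsumR (fun j => abspow_inv s j ^ 2) (zball (S m))
  + 2 / (2 * s - 1) * Rpower (INR (S m)) (- (2 * s - 1)) <= zeta_bound s.
Proof.
  set (b := 2 * s - 1). assert (Hb : 0 < b) by (unfold b; lra).
  induction m as [|m IH].
  - change (zball 1) with (1%Z :: (-1)%Z :: 0%Z :: nil).
    rewrite !lsumR_cons, (abspow_inv_sqr 1 0), (abspow_inv_sqr (-1) 0) by reflexivity.
    change (abspow_inv s 0) with 0. simpl lsumR.
    rewrite !Rpower_1l. unfold zeta_bound. fold b. lra.
  - change (zball (S (S m)))
      with (Z.of_nat (S (S m)) :: (- Z.of_nat (S (S m)))%Z :: zball (S m)).
    rewrite !lsumR_cons, !(abspow_inv_sqr _ (S m)) by lia.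
    replace (- (2 * s)) with (- (b + 1)) by (unfold b; ring).
    pose proof (Rpower_neg_telescope b (INR (S m)) Hb (lt_0_INR _ (Nat.lt_0_succ m))) as T.
    rewrite <- S_INR in T.
    set (x := INR (S m)) in *. set (y := INR (S (S m))) in *.
    assert (T2 : 2 * Rpower y (- (b + 1)) <= 2 / b * (Rpower x (- b) - Rpower y (- b))).
    { replace (2 * Rpower y (- (b + 1))) with (2 / b * (b * Rpower y (- (b + 1))))
        by (field; lra).
      apply Rmult_le_compat_l; [apply Rlt_le, Rdiv_lt_0_compat|]; lra. }
    lra.
Qed.

Lemma lsumR_abspow_inv_sqr_le l : NoDup l ->
  lsumR (fun j => abspow_inv s j ^ 2) l <= zeta_bound s.
Proof.
  intros Hl. destruct (zball_cover l) as [M HM].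
  eapply Rle_trans.
  - apply lsumR_incl; [intros; apply pow2_ge_0 | exact Hl |].
    intros j Hj. apply (zball_incl M (S M)); auto.
  - pose proof (lsumR_abspow_inv_sqr_zball M).
    assert (0 < 2 / (2 * s - 1) * Rpower (INR (S M)) (- (2 * s - 1))).
    { apply Rmult_lt_0_compat; [apply Rdiv_lt_0_compat; lra | apply exp_pos]. }
    lra.
Qed.
End Weights.

(** * The trilinear estimate *)

Definition coef_product (s : R) (u v w : seqC) (k : Z) (p : Z * Z) : R :=
  weighted_coef s u (fst p) * weighted_coef s v (snd p)
  * weighted_coef s w (k - fst p - snd p).

(* [|k1|^s |k2|^s |k3|^s * kernel3 = |k1|^s + |k2|^s + |k3|^s], which absorbs the weight
   of the output frequency [k = k1 + k2 + k3]. *)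
Definition kernel3 (s : R) (k : Z) (p : Z * Z) : R :=
  let x1 := abspow_inv s (fst p) in
  let x2 := abspow_inv s (snd p) in
  let x3 := abspow_inv s (k - fst p - snd p) in
  x1 * x2 + x2 * x3 + x1 * x3.

Lemma Cmod_cexpi x : Cmod (cexpi x) = 1.
Proof.
  unfold Cmod, cexpi. simpl. rewrite !Rmult_1_r.
  pose proof (sin2_cos2 x) as H. unfold Rsqr in H.
  rewrite Rplus_comm, H. apply sqrt_1.
Qed.

Section Pointwise.
Variable s : R.
Hypothesis s_ge0 : 0 <= s.

Lemma coef_product_ge0 u v w k p : 0 <= coef_product s u v w k p.
Proof.
  unfold coef_product. pose proof (weighted_coef_ge0 s u (fst p)).
  pose proof (weighted_coef_ge0 s v (snd p)). pose proof (weighted_coef_ge0 s w (k - fst p - snd p)).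
  apply Rmult_le_pos; [apply Rmult_le_pos|]; assumption.
Qed.

Lemma kernel3_ge0 k p : 0 <= kernel3 s k p.
Proof.
  assert (H : forall j, 0 <= abspow_inv s j).
  { intros j. unfold abspow_inv. destruct (Z.eqb j 0); [lra|].
    left. apply Rinv_0_lt_compat, abspow_gt0. }
  unfold kernel3. pose proof (H (fst p)). pose proof (H (snd p)).
  pose proof (H (k - fst p - snd p)%Z). nra.
Qed.

Lemma abspow_add3_le k1 k2 k3 : (k1 + k2 + k3 <> 0)%Z ->
  abspow s (k1 + k2 + k3) <= Rpower 3 s * (abspow s k1 + abspow s k2 + abspow s k3).
Proof.
  intros Hk.
  set (a1 := IZR (Z.abs k1)). set (a2 := IZR (Z.abs k2)). set (a3 := IZR (Z.abs k3)).
  set (m := Rmax a1 (Rmax a2 a3)).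
  assert (Hm1 : a1 <= m) by apply Rmax_l.
  assert (Hm2 : a2 <= m) by (eapply Rle_trans; [apply Rmax_l | apply Rmax_r]).
  assert (Hm3 : a3 <= m) by (eapply Rle_trans; [apply Rmax_r | apply Rmax_r]).
  assert (Hpos : 0 < IZR (Z.abs (k1 + k2 + k3))) by (apply IZR_lt; lia).
  assert (Hsum : IZR (Z.abs (k1 + k2 + k3)) <= 3 * m).
  { assert (IZR (Z.abs (k1 + k2 + k3)) <= a1 + a2 + a3)
      by (unfold a1, a2, a3; rewrite <- !plus_IZR; apply IZR_le; lia).
    lra. }
  unfold abspow at 1. apply Rle_trans with (Rpower (3 * m) s).
  { apply Rle_Rpower_l; [exact s_ge0 | lra]. }
  rewrite <- Rpower_mult_distr by lra.
  apply Rmult_le_compat_l; [left; apply exp_pos|].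
  unfold abspow; fold a1 a2 a3.
  pose proof (exp_pos (s * ln a1)); pose proof (exp_pos (s * ln a2));
    pose proof (exp_pos (s * ln a3)).
  unfold m, Rmax, Rpower in *.
  destruct (Rle_dec a2 a3), (Rle_dec a1 _); lra.
Qed.

Lemma Cmod_R3_term_weighted_le t u v w k p : k <> 0%Z ->
  abspow s k * Cmod (R3_term t u v w k p)
  <= Rpower 3 s * (coef_product s u v w k p * kernel3 s k p).
Proof.
  intros Hk. destruct p as [k1 k2].
  pose proof (coef_product_ge0 u v w k (k1, k2)).
  pose proof (kernel3_ge0 k (k1, k2)).
  unfold R3_term. simpl fst; simpl snd. set (k3 := (k - k1 - k2)%Z).
  destruct (Z.eqb_spec k1 0) as [E1|E1]; [| destruct (Z.eqb_spec k2 0) as [E2|E2];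
    [| destruct (Z.eqb_spec k3 0) as [E3|E3]]]; simpl.
  1-3: rewrite Cmod_0, Rmult_0_r; apply Rmult_le_pos; [left; apply exp_pos |];
    apply Rmult_le_pos; assumption.
  unfold coef_product, kernel3, weighted_coef, abspow_inv. simpl fst; simpl snd. fold k3.
  destruct (Z.eqb_spec k1 0); [lia|]. destruct (Z.eqb_spec k2 0); [lia|].
  destruct (Z.eqb_spec k3 0); [lia|].
  rewrite !Cmod_mult, Cmod_cexpi, Cmod_inv, Cmod_R, Rabs_Zabs.
  2: { intros E. apply (f_equal fst) in E. simpl in E. apply eq_IZR in E. lia. }
  assert (Hinv : 0 <= / IZR (Z.abs k1) <= 1).
  { assert (1 <= IZR (Z.abs k1)) by (apply IZR_le; lia).
    split; [left; apply Rinv_0_lt_compat; lra|].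
    rewrite <- Rinv_1. apply Rinv_le_contravar; lra. }
  assert (Hw := abspow_add3_le k1 k2 k3 ltac:(unfold k3; lia)).
  replace (k1 + k2 + k3)%Z with k in Hw by (unfold k3; lia).
  pose proof (abspow_gt0 s k1); pose proof (abspow_gt0 s k2); pose proof (abspow_gt0 s k3).
  pose proof (abspow_gt0 s k).
  set (U := Cmod (u k1)). set (V := Cmod (v k2)). set (W := Cmod (w k3)).
  assert (0 <= U * V * W) by (unfold U, V, W; pose proof (Cmod_ge_0 (u k1));
    pose proof (Cmod_ge_0 (v k2)); pose proof (Cmod_ge_0 (w k3));
    apply Rmult_le_pos; [apply Rmult_le_pos|]; assumption).
  replace (Rpower 3 s * (abspow s k1 * U * (abspow s k2 * V) * (abspow s k3 * W) *
     (/ abspow s k1 * / abspow s k2 + / abspow s k2 * / abspow s k3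
      + / abspow s k1 * / abspow s k3)))
    with (Rpower 3 s * (abspow s k1 + abspow s k2 + abspow s k3) * (U * V * W))
    by (field; repeat split; lra).
  replace (abspow s k * (1 * / IZR (Z.abs k1) * U * V * W))
    with (abspow s k * (U * V * W) * / IZR (Z.abs k1)) by ring.
  assert (abspow s k * (U * V * W) <= Rpower 3 s * (abspow s k1 + abspow s k2 + abspow s k3) * (U * V * W))
    by (apply Rmult_le_compat_r; assumption).
  assert (0 <= abspow s k * (U * V * W)) by (apply Rmult_le_pos; lra).
  nra.
Qed.
End Pointwise.

Lemma lsumR_nested_le {I : Type} (y : I -> R) (Y : R) (h : I -> I -> I) l1 l2 :
  (forall i, 0 <= y i) -> (forall l, NoDup l -> lsumR y l <= Y) ->
  (forall a, FinFun.Injective (h a)) -> NoDup l1 -> NoDup l2 ->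
  lsumR (fun a => lsumR (fun b => y a * y (h a b)) l2) l1 <= Y * Y.
Proof.
  intros Hy HY Hh Hl1 Hl2.
  assert (HY0 : 0 <= Y) by exact (HY nil (NoDup_nil _)).
  apply Rle_trans with (lsumR (fun a => y a * Y) l1).
  - apply lsumR_le. intros a _. rewrite lsumR_scal, <- (lsumR_map (h a) y).
    apply Rmult_le_compat_l; [apply Hy|].
    apply HY, FinFun.Injective_map_NoDup; [apply Hh | exact Hl2].
  - rewrite (lsumR_ext _ (fun a => Y * y a)) by (intros; ring).
    rewrite lsumR_scal. apply Rmult_le_compat_l; [exact HY0 | apply HY, Hl1].
Qed.

Lemma sqr_add3_le (a b c : R) : (a + b + c) ^ 2 <= 3 * (a ^ 2 + b ^ 2 + c ^ 2).
Proof.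
  pose proof (pow2_ge_0 (a - b)); pose proof (pow2_ge_0 (b - c)); pose proof (pow2_ge_0 (a - c)).
  nra.
Qed.

Lemma lsumR_kernel3_sqr_le (s : R) (hs : 1 / 2 < s) k N :
  lsumR (fun p => kernel3 s k p ^ 2) (zbox N) <= 9 * zeta_bound s ^ 2.
Proof.
  set (y j := abspow_inv s j ^ 2).
  assert (Hy : forall j, 0 <= y j) by (intros; apply pow2_ge_0).
  assert (HY := lsumR_abspow_inv_sqr_le s hs).
  assert (T1 := lsumR_nested_le y _ (fun _ b => b) (zball N) (zball N) Hy HY
                  (fun _ b b' E => E) (NoDup_zball N) (NoDup_zball N)).
  assert (T2 := lsumR_nested_le y _ (fun b a => (k - a - b)%Z) (zball N) (zball N) Hy HY
                  ltac:(intros b a a' E; lia) (NoDup_zball N) (NoDup_zball N)).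
  assert (T3 := lsumR_nested_le y _ (fun a b => (k - a - b)%Z) (zball N) (zball N) Hy HY
                  ltac:(intros a b b' E; lia) (NoDup_zball N) (NoDup_zball N)).
  rewrite lsumR_comm in T2.
  apply Rle_trans with (lsumR (fun p => 3 * (y (fst p) * y (snd p))
     + 3 * (y (snd p) * y (k - fst p - snd p)%Z) + 3 * (y (fst p) * y (k - fst p - snd p)%Z))
     (zbox N)).
  - apply lsumR_le. intros p _. unfold kernel3, y.
    eapply Rle_trans; [apply sqr_add3_le | apply Req_le; ring].
  - rewrite !lsumR_plus, !lsumR_scal. unfold zbox. rewrite !lsumR_list_prod. simpl.
    lra.
Qed.

Lemma lsumR_coef_product_sqr_le (s : R) (u v w : seqC) :
  inHs s u -> inHs s v -> inHs s w -> forall K N, NoDup K ->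
  lsumR (fun k => lsumR (fun p => coef_product s u v w k p ^ 2) (zbox N)) K
  <= Series (Hs_term s u) * Series (Hs_term s v) * Series (Hs_term s w).
Proof.
  intros Hu Hv Hw K N HK.
  set (c a j := weighted_coef s a j ^ 2).
  assert (Hc : forall a j, 0 <= c a j) by (intros; apply pow2_ge_0).
  rewrite lsumR_comm. unfold zbox. rewrite lsumR_list_prod.
  apply Rle_trans with (lsumR (fun a => lsumR (fun b =>
    c u a * (c v b * Series (Hs_term s w))) (zball N)) (zball N)).
  - apply lsumR_le; intros a _. apply lsumR_le; intros b _.
    rewrite (lsumR_ext _ (fun k => c u a * c v b * c w (k - (a + b))%Z))
      by (intros; unfold coef_product, c; simpl; rewrite Z.sub_add_distr; ring).
    rewrite lsumR_scal, Rmult_assoc, <- (lsumR_map (fun k => (k - (a + b))%Z) (c w)).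
    apply Rmult_le_compat_l; [apply Hc|]. apply Rmult_le_compat_l; [apply Hc|].
    apply lsumR_weighted_coef_le_Series; [exact Hw|].
    apply FinFun.Injective_map_NoDup; [intros x x' E; lia | exact HK].
  - rewrite lsumR_mult.
    rewrite (lsumR_ext (fun b => c v b * Series (Hs_term s w))
                       (fun b => Series (Hs_term s w) * c v b)) by (intros; ring).
    rewrite lsumR_scal.
    assert (Hu' := lsumR_weighted_coef_le_Series s u Hu (zball N) (NoDup_zball N)).
    assert (Hv' := lsumR_weighted_coef_le_Series s v Hv (zball N) (NoDup_zball N)).
    fold (c u) (c v) in Hu', Hv'.
    pose proof (Series_Hs_term_ge0 s w Hw).
    apply Rle_trans with (Series (Hs_term s u) * (Series (Hs_term s w) * Series (Hs_term s v)));
      [| right; ring].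
    apply Rmult_le_compat; [apply lsumR_ge0, Hc | | exact Hu' |].
    + apply Rmult_le_pos; [assumption | apply lsumR_ge0, Hc].
    + apply Rmult_le_compat_l; assumption.
Qed.

Definition R3_const (s : R) : R := 3 * Rpower 3 s * zeta_bound s.

Lemma R3_const_ge0 s : 1 / 2 < s -> 0 <= R3_const s.
Proof.
  intros hs. unfold R3_const, zeta_bound.
  assert (0 < 2 / (2 * s - 1)) by (apply Rdiv_lt_0_compat; lra).
  pose proof (exp_pos (s * ln 3)). unfold Rpower. nra.
Qed.

Section R3_estimate.
Variables (s t : R) (u v w : seqC).
Hypotheses (hs : 1 / 2 < s) (Hu : inHs s u) (Hv : inHs s v) (Hw : inHs s w).

Let norm3 := Series (Hs_term s u) * Series (Hs_term s v) * Series (Hs_term s w).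

Lemma R3_zbox_bound k N : k <> 0%Z ->
  (abspow s k * lsumR (fun p => Cmod (R3_term t u v w k p)) (zbox N)) ^ 2
  <= R3_const s ^ 2 * lsumR (fun p => coef_product s u v w k p ^ 2) (zbox N).
Proof.
  intros Hk.
  set (P := lsumR (fun p => coef_product s u v w k p * kernel3 s k p) (zbox N)).
  assert (Hpt : abspow s k * lsumR (fun p => Cmod (R3_term t u v w k p)) (zbox N)
                <= Rpower 3 s * P).
  { unfold P. rewrite <- !lsumR_scal. apply lsumR_le. intros p _.
    apply Cmod_R3_term_weighted_le; [lra | exact Hk]. }
  assert (H0 : 0 <= abspow s k * lsumR (fun p => Cmod (R3_term t u v w k p)) (zbox N)).
  { apply Rmult_le_pos; [left; apply abspow_gt0 | apply lsumR_ge0; intros; apply Cmod_ge_0]. }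
  assert (HCS := lsumR_Cauchy_Schwarz (coef_product s u v w k) (kernel3 s k) (zbox N)).
  fold P in HCS.
  assert (Hker := lsumR_kernel3_sqr_le s hs k N).
  assert (Hcp : 0 <= lsumR (fun p => coef_product s u v w k p ^ 2) (zbox N))
    by (apply lsumR_ge0; intros; apply pow2_ge_0).
  eapply Rle_trans; [apply pow_incr; split; [exact H0 | exact Hpt]|].
  unfold R3_const. rewrite Rpow_mult_distr.
  replace ((3 * Rpower 3 s * zeta_bound s) ^ 2
           * lsumR (fun p => coef_product s u v w k p ^ 2) (zbox N))
    with (Rpower 3 s ^ 2
          * (lsumR (fun p => coef_product s u v w k p ^ 2) (zbox N) * (9 * zeta_bound s ^ 2)))
    by ring.
  apply Rmult_le_compat_l; [apply pow2_ge_0|].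
  eapply Rle_trans; [exact HCS | apply Rmult_le_compat_l; assumption].
Qed.

Lemma R3_zbox_abs_le k N : k <> 0%Z ->
  lsumR (fun p => Cmod (R3_term t u v w k p)) (zbox N) <= 1 + R3_const s ^ 2 * norm3.
Proof.
  intros Hk. set (B := lsumR (fun p => Cmod (R3_term t u v w k p)) (zbox N)).
  assert (HB : 0 <= B) by (apply lsumR_ge0; intros; apply Cmod_ge_0).
  assert (Hwt := abspow_ge1 s k ltac:(lra) Hk).
  assert (Hsingle : lsumR (fun p => coef_product s u v w k p ^ 2) (zbox N) <= norm3).
  { pose proof (lsumR_coef_product_sqr_le s u v w Hu Hv Hw (k :: nil) N) as H.
    simpl in H. rewrite Rplus_0_r in H. apply H. repeat constructor. auto. }
  assert (Hsq : (abspow s k * B) ^ 2 <= R3_const s ^ 2 * norm3).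
  { eapply Rle_trans; [apply R3_zbox_bound, Hk|].
    apply Rmult_le_compat_l; [apply pow2_ge_0 | exact Hsingle]. }
  assert (B <= abspow s k * B) by nra.
  assert (abspow s k * B <= 1 + (abspow s k * B) ^ 2) by nra.
  lra.
Qed.

Lemma R3_exists : exists r, is_R3 t u v w r.
Proof.
  assert (Hsum : forall k, exists a, k <> 0%Z -> has_sum (R3_term t u v w k) a).
  { intros k. destruct (Z.eq_dec k 0) as [->|Hk]; [exists (RtoC 0); contradiction|].
    destruct (has_sum_of_exhaustion _ zbox NoDup_zbox zbox_incl zbox_cover
                (R3_term t u v w k) _ (fun N => R3_zbox_abs_le k N Hk)) as [a Ha].
    exists a. intros _. exact Ha. }
  exists (fun k => proj1_sig (constructive_indefinite_description _ (Hsum k))).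
  intros k Hk. split.
  - exact (abs_summable_of_exhaustion _ zbox zbox_cover
             (R3_term t u v w k) _ (fun N => R3_zbox_abs_le k N Hk)).
  - exact (proj2_sig (constructive_indefinite_description _ (Hsum k)) Hk).
Qed.

Lemma R3_weighted_bound r : is_R3 t u v w r ->
  forall M, lsumR (fun j => weighted_coef s r j ^ 2) (zball M) <= R3_const s ^ 2 * norm3.
Proof.
  intros Hr M.
  (* [|r k|] is the limit of the moduli of the partial sums over the squares [zbox N]. *)
  set (g k N := if Z.eqb k 0 then 0
                else abspow s k * Cmod (lsum (R3_term t u v w k) (zbox N))).
  assert (Hlim : is_lim_seq (fun N => lsumR (fun k => g k N ^ 2) (zball M))
                   (lsumR (fun j => weighted_coef s r j ^ 2) (zball M))).
  { apply is_lim_seq_lsumR. intros k _.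
    apply (is_lim_seq_ext (fun N => g k N * g k N)); [intros; ring|].
    replace (weighted_coef s r k ^ 2) with (weighted_coef s r k * weighted_coef s r k) by ring.
    unfold g, weighted_coef. destruct (Z.eqb_spec k 0) as [_|Hk].
    - apply (is_lim_seq_ext (fun _ => 0 * 0)); [reflexivity | apply is_lim_seq_const].
    - assert (HC := has_sum_lim_Cmod_exhaustion _ zbox NoDup_zbox zbox_incl zbox_cover
                      _ _ (proj2 (Hr k Hk))).
      apply is_lim_seq_mult'; apply is_lim_seq_mult'; auto using is_lim_seq_const. }
  enough (Hle : forall N, lsumR (fun k => g k N ^ 2) (zball M) <= R3_const s ^ 2 * norm3)
    by exact (is_lim_seq_le _ _ _ _ Hle Hlim (is_lim_seq_const _)).
  intros N.
  eapply Rle_trans;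
    [| apply Rmult_le_compat_l;
       [apply pow2_ge_0 | apply (lsumR_coef_product_sqr_le s u v w Hu Hv Hw _ N (NoDup_zball M))]].
  rewrite <- lsumR_scal. apply lsumR_le. intros k _.
  unfold g. destruct (Z.eqb_spec k 0) as [_|Hk].
  - rewrite pow_i by lia. apply Rmult_le_pos; [apply pow2_ge_0|].
    apply lsumR_ge0; intros; apply pow2_ge_0.
  - eapply Rle_trans; [| apply R3_zbox_bound, Hk].
    apply pow_incr. split.
    + apply Rmult_le_pos; [left; apply abspow_gt0 | apply Cmod_ge_0].
    + apply Rmult_le_compat_l; [left; apply abspow_gt0 | apply Cmod_lsum_le].
Qed.

End R3_estimate.

Theorem lemma7p17 (s : R) (hs : 1/2 < s) :
  exists c6 : R, forall (t : R) (u v w : seqC),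
    inHs s u -> inHs s v -> inHs s w ->
    exists r : seqC, is_R3 t u v w r /\ inHs s r /\
      Hs_norm s r <= c6 * Hs_norm s u * Hs_norm s v * Hs_norm s w.
Proof.
  exists (R3_const s). intros t u v w Hu Hv Hw.
  destruct (R3_exists s t u v w hs Hu Hv Hw) as [r Hr].
  destruct (inHs_of_weighted_bound s r _ (R3_weighted_bound s t u v w hs Hu Hv Hw r Hr))
    as [Hrs Hbound].
  exists r. split; [exact Hr | split; [exact Hrs|]].
  pose proof (Series_Hs_term_ge0 s u Hu); pose proof (Series_Hs_term_ge0 s v Hv).
  pose proof (Series_Hs_term_ge0 s w Hw); pose proof (R3_const_ge0 s hs).
  unfold Hs_norm. eapply Rle_trans; [apply sqrt_le_1_alt, Hbound|].
  rewrite !sqrt_mult, sqrt_pow2; [right; ring | ..];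
    repeat first [assumption | apply pow2_ge_0 | apply Rmult_le_pos].
Qed.
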